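(* Let $n\ge 1$ and let $\mathcal{A}$ be the real central hyperplane arrangement in $\mathbb{R}^{n+1}$ consisting of the hyperplanes $\{x_i=x_j\}$ and $\{x_i=-x_j\}$ for $1\le i<j\le n+1$, together with the hyperplane $\{x_1=0\}$. Then $\mathcal{A}$ is simplicial, i.e. every chamber (connected component of the complement of the union of the hyperplanes in $\mathbb{R}^{n+1}$) is an open simplicial cone. *)

From mathcomp Require Import all_boot.
From Stdlib Require Import Reals.

Set Implicit Arguments.
Unset Strict Implicit.
Unset Printing Implicit Defensive.

(* Points of R^(n+1): coordinates indexed by 'I_(n.+1); paper's x_1 is x ord0. *)
Definition pt (n : nat) := 'I_n.+1 -> R.

(* Open sets of R^(n+1) (sup-norm balls; same topology as Euclidean). *)
Definition is_open (n : nat) (U : pt n -> Prop) : Prop :=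
  forall x, U x -> exists eps : R, (0 < eps)%R /\
    forall y : pt n, (forall i, (Rabs (y i - x i) < eps)%R) -> U y.

Definition connected (n : nat) (S : pt n -> Prop) : Prop :=
  ~ exists U V : pt n -> Prop,
      is_open U /\ is_open V /\
      (forall x, S x -> U x \/ V x) /\
      (exists x, S x /\ U x) /\ (exists x, S x /\ V x) /\
      (forall x, S x -> U x -> V x -> False).

Definition arr_complement (n : nat) (x : pt n) : Prop :=
  x ord0 <> 0%R /\
  forall i j : 'I_n.+1, (i < j)%N -> x i <> x j /\ x i <> (- x j)%R.

Definition is_chamber (n : nat) (C : pt n -> Prop) : Prop :=
  (exists x, C x) /\
  (forall x, C x -> arr_complement x) /\
  connected C /\
  (forall D : pt n -> Prop,
      (forall x, C x -> D x) -> (forall x, D x -> arr_complement x) ->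
      connected D -> forall x, D x -> C x).

Definition rsum (n : nat) (f : 'I_n.+1 -> R) : R := \big[Rplus/0%R]_(k < n.+1) f k.

Definition open_simplicial_cone (n : nat) (C : pt n -> Prop) : Prop :=
  exists v : 'I_n.+1 -> pt n,
    (forall c : 'I_n.+1 -> R,
        (forall i, rsum (fun k => (c k * v k i)%R) = 0%R) -> forall k, c k = 0%R) /\
    (forall x : pt n,
        C x <-> exists c : 'I_n.+1 -> R,
                  (forall k, (0 < c k)%R) /\
                  forall i, x i = rsum (fun k => (c k * v k i)%R)).

From HB Require Import structures.
From mathcomp Require Import all_boot.
From Stdlib Require Import Reals Lra Classical FunctionalExtensionality.

(* Fix a point x0 of C.
   1. A connected set avoiding a hyperplane lies on one side of it (open
      half-spaces are open); conversely the set of points lying on the same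
      side as x0 of every hyperplane is convex, hence connected, and avoids
      the arrangement.  By maximality, C is exactly that set.
   2. The walls x_i = +-x_j force the |x0_i| to be pairwise distinct.  List
      the coordinates by increasing |x0_i| (permutation pi, inverse rk) and
      set y_m = sgn(x0_(pi m)) x_(pi m).  Then C becomes the cone
      |y_0| < y_1 < ... < y_n, together with y_0 > 0 when x_1 has the
      smallest absolute value (otherwise the wall x_1 = 0 is implied).
   3. Both cones are simplicial: writing y_m = c_0 + ... + c_m (and, in the
      second case, y_0 = c_0 - c_1 instead) exhibits explicit generators.
   4. Pulling these generators back along the signed permutation of the
      coordinates gives generators of C. *)

Set Implicit Arguments.
Unset Strict Implicit.
Unset Printing Implicit Defensive.

Local Open Scope R_scope.

Lemma Rabs_lt_iff (u w : R) : Rabs u < w <-> - w < u < w.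
Proof. split_Rabs; lra. Qed.

Lemma Rabs_le_iff (u w : R) : Rabs u <= w <-> - w <= u <= w.
Proof. split_Rabs; lra. Qed.

(* The argument
   looks at the supremum m of the t such that [0, t] lies in P. *)
Lemma unit_interval_connected (P Q : R -> Prop) :
  (forall t, P t -> exists d, 0 < d /\ forall s, Rabs (s - t) < d -> P s) ->
  (forall t, Q t -> exists d, 0 < d /\ forall s, Rabs (s - t) < d -> Q s) ->
  (forall t, 0 <= t <= 1 -> P t \/ Q t) -> P 0 -> Q 1 ->
  (forall t, 0 <= t <= 1 -> P t -> Q t -> False) -> False.
Proof.
move=> openP openQ cover P0 Q1 disj.
pose E t := 0 <= t <= 1 /\ forall s, 0 <= s <= t -> P s.
have E0 : E 0 by split=> [|s hs]; [lra | have -> : s = 0 by lra].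
have bounded_E : bound E by exists 1 => t [[_ ?] _].
have [m [ub lub]] := completeness E bounded_E (ex_intro _ 0 E0).
have m01 : 0 <= m <= 1 by split; [exact: ub E0 | apply: lub => t [[_ ?] _]].
have below_m : forall s, 0 <= s < m -> P s.
{ move=> s hs; apply: NNPP => nPs.
  suff : m <= s by lra.
  apply: lub => t [ht Pt]; apply: Rnot_lt_le => lt_st; apply/nPs/Pt; lra. }
case: (cover m m01) => [Pm | Qm].
- have [d [d0 ball_d]] := openP m Pm.
  pose t := Rmin (m + d / 2) 1.
  have Et : E t.
  { rewrite /t /Rmin; case: Rle_dec => hmin; split; try lra;
      move=> s hs; case: (Rlt_dec s m) => hsm;
      by [apply: below_m; lra | apply: ball_d; apply/Rabs_lt_iff; lra]. }
  have := ub t Et; rewrite /t /Rmin; case: Rle_dec => _ ht; first lra.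
  have m1 : m = 1 by lra.
  by apply: (disj 1); [lra | rewrite -m1 |].
- have m_pos : 0 < m.
  { case: (Req_dec m 0) => [m0 | ?]; last lra.
    by rewrite m0 in Qm; case: (disj 0 _ P0 Qm); lra. }
  have [d [d0 ball_d]] := openQ m Qm.
  pose s := Rmax 0 (m - d / 2).
  have s_lt : 0 <= s < m by rewrite /s /Rmax; case: Rle_dec; lra.
  apply: (disj s); [lra | exact: below_m | apply: ball_d].
  by apply/Rabs_lt_iff; rewrite /s /Rmax; case: Rle_dec; lra.
Qed.

Lemma seq_prefix_bounded (N : nat) (g : nat -> R) :
  exists M, 0 < M /\ forall j, (j <= N)%nat -> Rabs (g j) <= M.
Proof.
elim: N => [|N [M [M0 bound_M]]].
- exists (Rabs (g O) + 1); split=> [|j]; first by have := Rabs_pos (g O); lra.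
  by rewrite leqn0 => /eqP ->; lra.
- exists (Rmax M (Rabs (g N.+1))); split=> [|j].
  + by apply: Rlt_le_trans (Rmax_l _ _).
  + rewrite leq_eqVlt => /orP [/eqP -> | lt_jN]; first exact: Rmax_r.
    exact: Rle_trans (bound_M j lt_jN) (Rmax_l _ _).
Qed.

Definition convex (n : nat) (S : pt n -> Prop) : Prop :=
  forall a b t, S a -> S b -> 0 <= t <= 1 -> S (fun i => a i + t * (b i - a i)).

(* Convex sets are connected: a separation (U, V) would restrict to a
   separation of the segment joining a point of U to a point of V. *)
Lemma convex_connected (n : nat) (S : pt n -> Prop) : convex S -> connected S.
Proof.
move=> cvx [U [V [openU [openV [cover [[a [Sa Ua]] [[b [Sb Vb]] disj]]]]]]].
have [M [M0 bound_M]] := seq_prefix_bounded n (fun j => b (inord j) - a (inord j)).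
have bound_ba : forall i : 'I_n.+1, Rabs (b i - a i) <= M.
{ by move=> i; have := bound_M i (ltn_ord i); rewrite inord_val. }
pose g t (i : 'I_n.+1) := a i + t * (b i - a i).
have open_path : forall W : pt n -> Prop, is_open W -> forall t, W (g t) ->
    exists d, 0 < d /\ forall s, Rabs (s - t) < d -> W (g s).
{ move=> W openW t Wt; have [e [e0 ball_e]] := openW _ Wt.
  exists (e / M); split=> [|s hs]; first exact: Rdiv_lt_0_compat.
  apply: ball_e => i.
  have -> : g s i - g t i = (s - t) * (b i - a i) by rewrite /g; ring.
  rewrite Rabs_mult; apply: Rle_lt_trans (Rmult_le_compat_l _ _ _ (Rabs_pos _) (bound_ba i)) _.
  have -> : e = e / M * M by field; lra.
  exact: Rmult_lt_compat_r. }
have g0 : g 0 = a by apply: functional_extensionality => i; rewrite /g; ring.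
have g1 : g 1 = b by apply: functional_extensionality => i; rewrite /g; ring.
apply: (@unit_interval_connected (fun t => U (g t)) (fun t => V (g t))).
- exact: open_path.
- exact: open_path.
- by move=> t ht; apply/cover/cvx.
- by rewrite g0.
- by rewrite g1.
- by move=> t ht; apply: disj; apply: cvx.
Qed.

Lemma open_halfplane (n : nat) (i j : 'I_n.+1) (al be : R) :
  is_open (fun z : pt n => 0 < al * z i + be * z j).
Proof.
move=> z /= hz; pose K := Rabs al + Rabs be + 1.
have K0 : 0 < K by have := Rabs_pos al; have := Rabs_pos be; rewrite /K; lra.
pose e := (al * z i + be * z j) / K.
have e0 : 0 < e by exact: Rdiv_lt_0_compat.
exists e; split=> // y close.
have near_i : Rabs (al * (y i - z i)) <= Rabs al * e.
{ by rewrite Rabs_mult; apply: Rmult_le_compat_l; [apply: Rabs_pos | apply: Rlt_le]. }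
have near_j : Rabs (be * (y j - z j)) <= Rabs be * e.
{ by rewrite Rabs_mult; apply: Rmult_le_compat_l; [apply: Rabs_pos | apply: Rlt_le]. }
have eK : al * z i + be * z j = K * e by rewrite /e; field; lra.
move: near_i near_j eK; rewrite !Rabs_le_iff /K; lra.
Qed.

(* A linear form  f z = al z_i + be z_j  that does not vanish on a connected
   set C has constant sign on C: otherwise {f z f x0 > 0} and {f z f x0 < 0}
   would separate C. *)
Lemma connected_form_sign (n : nat) (C : pt n -> Prop) (i j : 'I_n.+1)
    (al be : R) (x0 x : pt n) :
  connected C -> (forall z, C z -> al * z i + be * z j <> 0) -> C x0 -> C x ->
  0 < (al * x i + be * x j) * (al * x0 i + be * x0 j).
Proof.
move=> connC nz Cx0 Cx; apply: NNPP => opposite; apply: connC.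
pose f (z : pt n) := al * z i + be * z j.
have scaled : forall s (z : pt n), s * al * z i + s * be * z j = s * f z.
{ by move=> s z; rewrite /f; ring. }
have prod_nz : forall z, C z -> f x0 * f z <> 0.
{ by move=> z Cz; apply: Rmult_integral_contrapositive_currified; apply: nz. }
exists (fun z => 0 < f x0 * al * z i + f x0 * be * z j),
       (fun z => 0 < - f x0 * al * z i + - f x0 * be * z j).
do 2 (split; first exact: open_halfplane).
rewrite /=; split; [|split; [|split]].
- move=> z Cz; rewrite !scaled; have := prod_nz z Cz; lra.
- exists x0; split=> //; rewrite scaled.
  by have := prod_nz x0 Cx0; have := Rle_0_sqr (f x0); rewrite /Rsqr; lra.
- exists x; split=> //; rewrite scaled.
  by have := prod_nz x Cx; move: opposite; rewrite -/(f x) -/(f x0); lra.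
- by move=> z _; rewrite !scaled; lra.
Qed.

Definition same_side (n : nat) (x0 x : pt n) : Prop :=
  0 < x ord0 * x0 ord0 /\
  forall i j : 'I_n.+1, i != j ->
    0 < (x i - x j) * (x0 i - x0 j) /\ 0 < (x i + x j) * (x0 i + x0 j).

Lemma complement_neq (n : nat) (z : pt n) (i j : 'I_n.+1) :
  arr_complement z -> i != j -> z i <> z j /\ z i <> - z j.
Proof.
move=> [_ walls] neq; case: (ltngtP i j) => [lt_ij | lt_ji | eq_ij].
- exact: walls.
- by have [h1 h2] := walls j i lt_ji; split=> E; [apply: h1 | apply: h2]; lra.
- by case/eqP: neq; apply: val_inj.
Qed.

Lemma same_side_complement (n : nat) (x0 z : pt n) :
  same_side x0 z -> arr_complement z.
Proof.
move=> [side0 side]; split=> [E | i j lt_ij]; first by rewrite E in side0; lra.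
have neq : i != j by apply/eqP => E; rewrite E ltnn in lt_ij.
by have [h1 h2] := side i j neq; split=> E; rewrite E in h1 h2; nra.
Qed.

Lemma convex_comb_pos (u v w t : R) :
  0 < u * w -> 0 < v * w -> 0 <= t <= 1 -> 0 < (u + t * (v - u)) * w.
Proof.
move=> hu hv ht; have -> : (u + t * (v - u)) * w = u * w + t * (v * w - u * w) by ring.
case: (Rle_dec (u * w) (v * w)) => cmp; nra.
Qed.

Lemma same_side_convex (n : nat) (x0 : pt n) : convex (same_side x0).
Proof.
move=> a b t [a0 a_side] [b0 b_side] ht; split.
- exact: convex_comb_pos.
- move=> i j neq; have [a1 a2] := a_side i j neq; have [b1 b2] := b_side i j neq.
  have := convex_comb_pos a1 b1 ht; have := convex_comb_pos a2 b2 ht.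
  by split; lra.
Qed.

(* Every wall has constant sign on a chamber, so a chamber lies on the side
   of each of its points. *)
Lemma chamber_sub_same_side (n : nat) (C : pt n -> Prop) (x0 x : pt n) :
  is_chamber C -> C x0 -> C x -> same_side x0 x.
Proof.
move=> [_ [C_compl [connC _]]] Cx0 Cx.
have walls := fun z Cz => complement_neq (C_compl z Cz).
split=> [|i j neq].
- have nz : forall z, C z -> 1 * z ord0 + 0 * z ord0 <> 0.
  { by move=> z /C_compl [z0 _]; lra. }
  by have := connected_form_sign connC nz Cx0 Cx; lra.
- have nz_diff : forall z, C z -> 1 * z i + -1 * z j <> 0.
  { by move=> z /walls /(_ neq) [h _]; lra. }
  have nz_sum : forall z, C z -> 1 * z i + 1 * z j <> 0.
  { by move=> z /walls /(_ neq) [_ h]; lra. }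
  have := connected_form_sign connC nz_diff Cx0 Cx.
  have := connected_form_sign connC nz_sum Cx0 Cx.
  by split; lra.
Qed.

(* Hence a chamber is exactly the set of points on the side of x0 of every
   wall: this convex, hence connected, subset of the complement contains the
   chamber, so it equals it by maximality. *)
Lemma chamber_same_side (n : nat) (C : pt n -> Prop) (x0 : pt n) :
  is_chamber C -> C x0 -> forall x, C x <-> same_side x0 x.
Proof.
move=> chC Cx0 x; split; first exact: chamber_sub_same_side.
have [_ [_ [_ maxC]]] := chC.
apply: maxC => [z|z|]; first exact: chamber_sub_same_side.
- exact: same_side_complement.
- exact/convex_connected/same_side_convex.
Qed.

(* The sign of a real, taken to be -1 at 0. *)
Definition sgn (v : R) : R := if Rlt_dec 0 v then 1 else -1.

Lemma sgn_pm (v : R) : sgn v = 1 \/ sgn v = -1.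
Proof. by rewrite /sgn; case: Rlt_dec; [left | right]. Qed.

Lemma Rabs_sgn_mul (v w : R) : Rabs (sgn v * w) = Rabs w.
Proof. by rewrite Rabs_mult; case: (sgn_pm v) => ->; split_Rabs; lra. Qed.

Lemma sign_side_iff (a u : R) : a <> 0 -> 0 < u * a <-> 0 < sgn a * u.
Proof. by rewrite /sgn => a_nz; case: Rlt_dec => ha /=; split=> h; nra. Qed.

Lemma pos_mul_iff (w p : R) : 0 < p -> 0 < w * p <-> 0 < w.
Proof. by move=> hp; split=> h; nra. Qed.

Lemma dominance_sides (a b u v : R) : Rabs a < Rabs b ->
  (0 < (v - u) * (b - a) /\ 0 < (v + u) * (b + a)) <-> Rabs u < sgn b * v.
Proof.
rewrite /sgn !Rabs_lt_iff; case: Rlt_dec => hb /= hab.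
- rewrite Rabs_right in hab; last lra.
  by rewrite !pos_mul_iff; [intuition lra | lra | lra].
- rewrite Rabs_left1 in hab; last lra.
  rewrite -(Rmult_opp_opp (v - u)) -(Rmult_opp_opp (v + u)) !pos_mul_iff;
    by [intuition lra | lra | lra].
Qed.

Definition Rltb (u v : R) : bool := if Rlt_dec u v then true else false.

Lemma RltbP (u v : R) : reflect (u < v) (Rltb u v).
Proof. by rewrite /Rltb; case: Rlt_dec => h; constructor. Qed.

Definition abs_rank (n : nat) (x0 : pt n) (i : 'I_n.+1) : nat :=
  #|[pred j | Rltb (Rabs (x0 j)) (Rabs (x0 i))]|.

(* The rank is an index: x0_i itself is not counted. *)
Lemma abs_rank_lt (n : nat) (x0 : pt n) (i : 'I_n.+1) : (abs_rank x0 i < n.+1)%nat.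
Proof.
rewrite -[n.+1]card_ord /abs_rank; apply/proper_card/properP.
split; first exact: subset_predT.
by exists i => //; rewrite inE; apply/negP => /RltbP; lra.
Qed.

Lemma abs_rank_mono (n : nat) (x0 : pt n) (p q : 'I_n.+1) :
  Rabs (x0 p) < Rabs (x0 q) -> (abs_rank x0 p < abs_rank x0 q)%nat.
Proof.
move=> lt_pq; apply/proper_card/properP; split.
- by apply/subsetP => j; rewrite !inE => /RltbP lt_jp; apply/RltbP; lra.
- by exists p; rewrite !inE; [apply/RltbP | apply/negP => /RltbP; lra].
Qed.

(* Off the arrangement the |x0_i| are pairwise distinct, so ranking them
   gives a permutation rk (with inverse pi) along which they increase. *)
Lemma abs_sorting (n : nat) (x0 : pt n) : arr_complement x0 ->
  exists rk pi : 'I_n.+1 -> 'I_n.+1, [/\ cancel rk pi, cancel pi rk &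
    forall p q, (rk p < rk q)%nat -> Rabs (x0 p) < Rabs (x0 q)].
Proof.
move=> x0c.
have abs_neq : forall p q, p != q -> Rabs (x0 p) <> Rabs (x0 q).
{ by move=> p q /(complement_neq x0c) [h1 h2]; split_Rabs; lra. }
pose rk i := Ordinal (abs_rank_lt x0 i).
have rk_abs : forall p q, (rk p < rk q)%nat -> Rabs (x0 p) < Rabs (x0 q).
{ move=> p q lt_pq; case: (Rtotal_order (Rabs (x0 p)) (Rabs (x0 q))) => [//|[eq_pq|gt_pq]].
  - case: (eqVneq p q) => [eq | neq]; last by have := abs_neq p q neq.
    by rewrite eq ltnn in lt_pq.
  - by have := ltn_trans lt_pq (abs_rank_mono gt_pq); rewrite ltnn. }
have rk_inj : injective rk.
{ move=> p q /(congr1 val) /= eq_pq; case: (eqVneq p q) => // /abs_neq neq.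
  case: (Rtotal_order (Rabs (x0 p)) (Rabs (x0 q))) => [lt_pq|[//|gt_pq]].
  - by have := abs_rank_mono lt_pq; rewrite eq_pq ltnn.
  - by have := abs_rank_mono gt_pq; rewrite eq_pq ltnn. }
by exists rk, (invF rk_inj); split; [exact: invF_f | exact: f_invF |].
Qed.

Definition dominated (pos0 : bool) (n : nat) (y : nat -> R) : Prop :=
  (forall k l, (k < l)%nat -> (l <= n)%nat -> Rabs (y k) < y l) /\
  (pos0 -> 0 < y O).

Section RankedCoordinates.

Variables (n : nat) (x0 : pt n) (rk pi : 'I_n.+1 -> 'I_n.+1).
Hypotheses (rkK : cancel rk pi) (piK : cancel pi rk).
Hypothesis rk_abs : forall p q, (rk p < rk q)%nat -> Rabs (x0 p) < Rabs (x0 q).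

(* The walls x_i = +-x_j only need to be tested on pairs ordered by rank,
   and on such a pair they amount to a domination inequality. *)
Lemma same_side_ranked (x : pt n) : x0 ord0 <> 0 ->
  same_side x0 x <->
  0 < sgn (x0 ord0) * x ord0 /\
  forall p q, (rk p < rk q)%nat -> Rabs (x p) < sgn (x0 q) * x q.
Proof.
move=> x0_nz; have side0_iff := sign_side_iff (x ord0) x0_nz.
split=> -[side0 side]; split; try exact/side0_iff.
- move=> p q lt_pq; have neq : q != p by apply/eqP => E; rewrite E ltnn in lt_pq.
  exact/(dominance_sides _ _ (rk_abs lt_pq))/side.
- move=> i j neq; case: (ltngtP (rk i) (rk j)) => [lt_ij | lt_ji | eq_ij].
  + by have [] := (dominance_sides _ _ (rk_abs lt_ij)).2 (side _ _ lt_ij); split; lra.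
  + exact/(dominance_sides _ _ (rk_abs lt_ji))/side.
  + by case/eqP: neq; rewrite -(rkK i) (val_inj eq_ij) rkK.
Qed.

Definition ranked_coords (x : pt n) (m : nat) : R :=
  sgn (x0 (pi (inord m))) * x (pi (inord m)).

Lemma ranked_coords_rk (x : pt n) (p : 'I_n.+1) :
  ranked_coords x (rk p) = sgn (x0 p) * x p.
Proof. by rewrite /ranked_coords inord_val rkK. Qed.

(* In ranked coordinates the ranked inequalities describe a dominated
   sequence; y_0 > 0 is required separately only when x_1 has rank 0. *)
Lemma ranked_dominated (x : pt n) :
  (0 < sgn (x0 ord0) * x ord0 /\
   forall p q, (rk p < rk q)%nat -> Rabs (x p) < sgn (x0 q) * x q) <->
  dominated (rk ord0 == ord0) n (ranked_coords x).
Proof.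
have at_rank0 : rk ord0 = ord0 -> ranked_coords x O = sgn (x0 ord0) * x ord0.
{ by move=> rk0; rewrite -ranked_coords_rk rk0. }
split=> [[pos0 ranked] | [dom pos0]].
- split=> [k l lt_kl le_ln | /eqP /at_rank0 ->] //.
  have le_kn : (k <= n)%nat := ltnW (leq_trans lt_kl le_ln).
  have := ranked (pi (inord k)) (pi (inord l)); rewrite !piK !inordK // => /(_ lt_kl).
  by rewrite /ranked_coords Rabs_sgn_mul.
- split=> [|p q lt_pq].
  + case: (eqVneq (rk ord0) ord0) => [rk0 | rk0].
      by rewrite -at_rank0 //; apply: pos0; rewrite rk0.
    have := dom O (rk ord0) _ (leq_ord _); rewrite lt0n ranked_coords_rk => /(_ rk0).
    by have := Rabs_pos (ranked_coords x O); lra.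
  + have := dom (rk p) (rk q) lt_pq (leq_ord _).
    by rewrite !ranked_coords_rk Rabs_sgn_mul.
Qed.

End RankedCoordinates.

Lemma partial_sum_pos (c : nat -> R) :
  (forall j, 0 < c j) -> forall m, 0 < sum_f_R0 c m.
Proof. by move=> c_pos; elim=> [|m IH] /=; [exact: c_pos | have := c_pos m.+1; lra]. Qed.

Lemma partial_sum_lt (c : nat -> R) :
  (forall j, 0 < c j) -> forall k l, (k < l)%nat -> sum_f_R0 c k < sum_f_R0 c l.
Proof.
move=> c_pos k; elim=> [|l IH] // lt_kl /=; have := c_pos l.+1.
by move: lt_kl; rewrite ltnS leq_eqVlt => /orP [/eqP -> | /IH]; lra.
Qed.

Definition comb (n : nat) (W : nat -> nat -> R) (c y : nat -> R) : Prop :=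
  forall m, (m <= n)%nat -> y m = sum_f_R0 (fun j => c j * W j m) n.

(* Generators of the cone  0 < y_0 < y_1 < ... < y_n : the j-th one has
   entries 0 before position j and 1 from position j on, so that
   y_m = c_0 + ... + c_m. *)
Definition step_gen (j m : nat) : R := if (j <= m)%nat then 1 else 0.

(* Generators of the cone  |y_0| < y_1 < ... < y_n : as [step_gen], except
   that y_0 = c_0 - c_1. *)
Definition twisted_gen (j m : nat) : R :=
  if m is O then match j with O => 1 | 1 => -1 | _ => 0 end else step_gen j m.

Lemma sum_step_gen_short (c : nat -> R) (m N : nat) : (N <= m)%nat ->
  sum_f_R0 (fun j => c j * step_gen j m) N = sum_f_R0 c N.
Proof.
elim: N => [|N IH] le_Nm /=; first by rewrite /step_gen leq0n; ring.
by rewrite IH ?(ltnW le_Nm) // /step_gen le_Nm; ring.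
Qed.

Lemma sum_step_gen (c : nat -> R) (m N : nat) : (m <= N)%nat ->
  sum_f_R0 (fun j => c j * step_gen j m) N = sum_f_R0 c m.
Proof.
elim: N => [|N IH]; first by rewrite leqn0 => /eqP ->; rewrite sum_step_gen_short.
rewrite leq_eqVlt => /orP [/eqP -> | lt_mN]; first by rewrite sum_step_gen_short.
by rewrite /= IH // /step_gen leqNgt lt_mN /=; ring.
Qed.

Lemma sum_twisted_gen0 (c : nat -> R) (N : nat) : (1 <= N)%nat ->
  sum_f_R0 (fun j => c j * twisted_gen j 0) N = c O - c 1%nat.
Proof.
elim: N => [|[|N] IH] // _; first by rewrite /=; ring.
by rewrite /= in IH *; rewrite IH //; ring.
Qed.

(* The vectors [step_gen] are linearly independent: all partial sums of the
   coefficients vanish. *)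
Lemma step_gen_indep (n : nat) (c : nat -> R) :
  comb n step_gen c (fun _ => 0) -> forall j, (j <= n)%nat -> c j = 0.
Proof.
move=> zero; have sums0 m : (m <= n)%nat -> sum_f_R0 c m = 0.
{ by move=> le_mn; rewrite -(sum_step_gen c le_mn) -zero. }
case=> [|j] le_jn; first exact: (sums0 O).
by have := sums0 _ le_jn; have := sums0 _ (ltnW le_jn); rewrite /=; lra.
Qed.

Lemma twisted_gen_indep (n : nat) (c : nat -> R) : (1 <= n)%nat ->
  comb n twisted_gen c (fun _ => 0) -> forall j, (j <= n)%nat -> c j = 0.
Proof.
move=> n_pos zero; have sums0 m : (1 <= m <= n)%nat -> sum_f_R0 c m = 0.
{ by case: m => [|m] // /andP [_ le_mn]; rewrite -(sum_step_gen c le_mn) (zero m.+1). }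
have diff0 : c O - c 1%nat = 0 by rewrite -(sum_twisted_gen0 c n_pos) -zero.
have sum1 := sums0 1%nat n_pos; rewrite /= in sum1.
case=> [|[|j]] le_jn; try lra.
have := sums0 j.+2 le_jn; have := sums0 j.+1 (ltnW le_jn); rewrite /=; lra.
Qed.

Definition step_coef (y : nat -> R) (j : nat) : R :=
  if j is j'.+1 then y j'.+1 - y j' else y O.

Definition twisted_coef (y : nat -> R) (j : nat) : R :=
  match j with
  | O => (y 1%nat + y O) / 2
  | 1 => (y 1%nat - y O) / 2
  | j'.+1 => y j'.+1 - y j'
  end.

Lemma sum_step_coef (y : nat -> R) (m : nat) : sum_f_R0 (step_coef y) m = y m.
Proof. by elim: m => [|m IH] //=; rewrite IH; ring. Qed.

Lemma sum_twisted_coef (y : nat -> R) (m : nat) :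
  (1 <= m)%nat -> sum_f_R0 (twisted_coef y) m = y m.
Proof.
elim: m => [|[|m] IH] // _; first by rewrite /=; field.
by rewrite /= in IH *; rewrite IH //; ring.
Qed.

Lemma dominated_pos_decomp (n : nat) (y : nat -> R) : dominated true n y ->
  exists c, (forall j, (j <= n)%nat -> 0 < c j) /\ comb n step_gen c y.
Proof.
move=> [dom pos0]; exists (step_coef y); split=> [[|j] le_jn | m le_mn] /=.
- exact: pos0.
- by have := dom j j.+1 (ltnSn j) le_jn; rewrite Rabs_lt_iff; lra.
- by rewrite sum_step_gen // sum_step_coef.
Qed.

Lemma dominated_pos_of_comb (n : nat) (c y : nat -> R) :
  (forall j, 0 < c j) -> comb n step_gen c y -> dominated true n y.
Proof.
move=> c_pos yc; have y_sum m : (m <= n)%nat -> y m = sum_f_R0 c m.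
{ by move=> le_mn; rewrite yc // sum_step_gen. }
split=> [k l lt_kl le_ln | _]; last by rewrite y_sum //; exact: c_pos.
rewrite !y_sum ?(ltnW (leq_trans lt_kl le_ln)) // Rabs_right.
- exact: partial_sum_lt.
- exact/Rle_ge/Rlt_le/partial_sum_pos.
Qed.

Lemma dominated_decomp (n : nat) (y : nat -> R) : (1 <= n)%nat -> dominated false n y ->
  exists c, (forall j, (j <= n)%nat -> 0 < c j) /\ comb n twisted_gen c y.
Proof.
move=> n_pos [dom _]; have := dom O 1%nat isT n_pos; rewrite Rabs_lt_iff => dom01.
exists (twisted_coef y); split=> [[|[|j]] le_jn | [|m] le_mn] /=; try lra.
- by have := dom j.+1 j.+2 (ltnSn _) le_jn; rewrite Rabs_lt_iff; lra.
- by rewrite sum_twisted_gen0 //=; field.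
- by rewrite sum_step_gen // sum_twisted_coef.
Qed.

Lemma dominated_of_comb (n : nat) (c y : nat -> R) :
  (forall j, 0 < c j) -> comb n twisted_gen c y -> dominated false n y.
Proof.
move=> c_pos yc; have y_sum m : (1 <= m <= n)%nat -> y m = sum_f_R0 c m.
{ by case: m => [|m] // /andP [_ le_mn]; rewrite yc // sum_step_gen. }
split=> // -[|k] l lt_kl le_ln.
- have y0 : y O = c O - c 1%nat by rewrite yc // sum_twisted_gen0 // (leq_trans lt_kl le_ln).
  have : c O + c 1%nat <= sum_f_R0 c l.
  { move: lt_kl; rewrite leq_eqVlt => /orP [/eqP <- | lt_1l]; first by rewrite /=; lra.
    exact/Rlt_le/(partial_sum_lt c_pos lt_1l). }
  by rewrite y0 y_sum ?lt_kl // Rabs_lt_iff; have := c_pos O; have := c_pos 1%nat; lra.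
- have le_kn := ltnW (leq_trans lt_kl le_ln).
  have l_pos : (0 < l)%nat := ltn_trans (ltn0Sn k) lt_kl.
  rewrite !y_sum ?le_kn ?le_ln ?l_pos // Rabs_right.
  + exact: partial_sum_lt.
  + exact/Rle_ge/Rlt_le/partial_sum_pos.
Qed.

Lemma Rplus_assoc_law : associative Rplus.
Proof. by move=> a b c; rewrite Rplus_assoc. Qed.

HB.instance Definition _ :=
  Monoid.isComLaw.Build R 0 Rplus Rplus_assoc_law Rplus_comm Rplus_0_l.

Lemma rsum_nat (n : nat) (F : nat -> R) : rsum (fun k : 'I_n.+1 => F k) = sum_f_R0 F n.
Proof.
rewrite /rsum; elim: n => [|n IH]; rewrite big_ord_recr /=; last by rewrite IH.
by rewrite big_ord0 Rplus_0_l.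
Qed.

Lemma rsum_scal (n : nat) (a : R) (c f : 'I_n.+1 -> R) :
  rsum (fun k => c k * (a * f k)) = a * rsum (fun k => c k * f k).
Proof. by rewrite /rsum; elim/big_rec2: _ => [|k s1 s2 _ ->]; ring. Qed.

(* [simplicial_seq_cone n W P]: the set P of sequences, restricted to their
   first n+1 terms, is the open cone spanned by the n+1 linearly independent
   vectors (W_k(0), ..., W_k(n)), k <= n. *)
Definition simplicial_seq_cone (n : nat) (W : nat -> nat -> R)
    (P : (nat -> R) -> Prop) : Prop :=
  (forall c : 'I_n.+1 -> R,
      (forall m : 'I_n.+1, rsum (fun k => c k * W k m) = 0) -> forall k, c k = 0) /\
  (forall y, P y <-> exists c : 'I_n.+1 -> R, (forall k, 0 < c k) /\
                       forall m : 'I_n.+1, y m = rsum (fun k => c k * W k m)).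

Lemma simplicial_seq_coneI (n : nat) (W : nat -> nat -> R) (P : (nat -> R) -> Prop) :
  (forall c, comb n W c (fun _ => 0) -> forall j, (j <= n)%nat -> c j = 0) ->
  (forall y, P y -> exists c, (forall j, (j <= n)%nat -> 0 < c j) /\ comb n W c y) ->
  (forall c y, (forall j, 0 < c j) -> comb n W c y -> P y) ->
  simplicial_seq_cone n W P.
Proof.
have rsum_seq (c : 'I_n.+1 -> R) m : (m <= n)%nat ->
    rsum (fun k => c k * W k (inord m : 'I_n.+1)) = sum_f_R0 (fun j => c (inord j) * W j m) n.
{ by move=> le_mn; rewrite -rsum_nat /rsum; apply: eq_bigr => k _; rewrite inord_val inordK. }
move=> indep decomp closed; split=> [c zero k | y].
- have := indep (fun j => c (inord j)) _ k (leq_ord k); rewrite inord_val; apply.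
  by move=> m le_mn; rewrite -rsum_seq // zero.
- split=> [/decomp [c [c_pos yc]] | [c [c_pos yc]]].
  + exists (fun k => c k); split=> [k | m]; first exact/c_pos/leq_ord.
    by rewrite yc ?leq_ord // -rsum_nat.
  + apply: (closed (fun j => c (inord j))) => [j | m le_mn]; first exact: c_pos.
    by rewrite -rsum_seq // -yc inordK.
Qed.

Lemma dominated_simplicial (n : nat) (pos0 : bool) : (1 <= n)%nat ->
  exists W, simplicial_seq_cone n W (dominated pos0 n).
Proof.
move=> n_pos; case: pos0.
- exists step_gen; apply: simplicial_seq_coneI.
  + exact: step_gen_indep.
  + exact: dominated_pos_decomp.
  + exact: dominated_pos_of_comb.
- exists twisted_gen; apply: simplicial_seq_coneI.
  + by move=> c; apply: twisted_gen_indep.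
  + by move=> y; apply: dominated_decomp.
  + exact: dominated_of_comb.
Qed.

Lemma signed_perm_simplicial (n : nat) (W : nat -> nat -> R) (P : (nat -> R) -> Prop)
    (C : pt n -> Prop) (rk pi : 'I_n.+1 -> 'I_n.+1) (s : 'I_n.+1 -> R) :
  cancel rk pi -> cancel pi rk -> (forall i, s i = 1 \/ s i = -1) ->
  simplicial_seq_cone n W P ->
  (forall x, C x <-> P (fun m => s (pi (inord m)) * x (pi (inord m)))) ->
  open_simplicial_cone C.
Proof.
move=> rkK piK s_pm [W_indep W_span] C_P.
have s_inv : forall i r, s i * (s i * r) = r by move=> i r; case: (s_pm i) => ->; ring.
exists (fun k i => s i * W k (rk i)); split=> [c zero | x].
- apply: W_indep => m; have := zero (pi m); rewrite rsum_scal piK.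
  by case: (s_pm (pi m)) => ->; lra.
- rewrite C_P W_span; split=> -[c [c_pos xc]]; exists c; split=> //.
  + by move=> i; have := xc (rk i); rewrite inord_val rkK rsum_scal => <-; rewrite s_inv.
  + by move=> m; rewrite inord_val xc rsum_scal piK s_inv.
Qed.

Local Close Scope R_scope.

Theorem lemma3p1 (n : nat) (hn : (1 <= n)%N) (C : pt n -> Prop) :
  is_chamber C -> open_simplicial_cone C.
Proof.
move=> chamberC; have [[x0 Cx0] [C_compl _]] := chamberC.
have [x0_nz _] := C_compl x0 Cx0.
have [rk [pi [rkK piK rk_abs]]] := abs_sorting (C_compl x0 Cx0).
have [W W_cone] := dominated_simplicial (rk ord0 == ord0) hn.
apply: (signed_perm_simplicial rkK piK (fun i => sgn_pm (x0 i)) W_cone) => x.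
rewrite (chamber_same_side chamberC Cx0) (same_side_ranked rkK rk_abs _ x0_nz).
exact: ranked_dominated.
Qed.
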